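(* Let $\mathcal{O}$ be the set of $24$-tuples of integers $a_1A_1+a_2A_2$ with $a_1\in\mathbb{Z}$ and $a_2=\pm3^\alpha2^\beta$ for some $\alpha\in\{0,1\}$, $\beta\in\mathbb{N}$, such that $3\nmid\gcd(a_1,a_2)$, where $A_1=(1,0,-1)^8$ and $A_2=(0,1,-1,-1,3,-2,-2,5,-3,-3,7,-4,-4,9,-5,-5,11,-6,-6,13,-7,-7,15,-8)$. Then for every $A\in\mathcal{O}$ and every odd positive integer $m$, the orbit of $S=\mathrm{IAP}(\pi_m(A),\pi_m(A)X_{24})$ is $(3m,3m)$-periodic and the triangles $\nabla S[3\lambda m]$ are balanced in $\mathbb{Z}/m\mathbb{Z}$ for all non-negative integers $\lambda$.
   Context: $\pi_m$ is reduction mod $m$; tuples are row vectors; $X_{24}=(\delta_{r,s}+\delta_{r,25-s})_{1\le r,s\le24}$. For $24$-tuples $A=(a_0,\dots,a_{23})$, $D=(d_0,\dots,d_{23})$, $\mathrm{IAP}(A,D)=(u_j)_{j\in\mathbb{Z}}$ with $u_{24q+r}=a_r+qd_r$. $S[n]=(u_0,\dots,u_{n-1})$. The orbit of $(u_j)$ is $(a_{i,j})_{(i,j)\in\mathbb{N}\times\mathbb{Z}}$ with $a_{0,j}=u_j$, $a_{i,j}=-a_{i-1,j}-a_{i-1,j+1}$; it is $(p,q)$-periodic if $a_{i+q,j}=a_{i,j+p}=a_{i,j}$ for all $(i,j)$. For a finite sequence, $\nabla(u_0,\dots,u_{n-1})=(a_{i,j})_{i+j<n}$ defined by the same rule; it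 is balanced if every element of $\mathbb{Z}/m\mathbb{Z}$ occurs equally often among its entries. *)

(* Values of Z/mZ are represented by their canonical
   representatives in [0, m) inside int (reduction (z %% m)%Z). *)
From HB Require Import structures.
From mathcomp Require Import all_boot all_order all_algebra.
Set Implicit Arguments. Unset Strict Implicit. Unset Printing Implicit Defensive.
Import Order.TTheory GRing.Theory Num.Theory.
Local Open Scope ring_scope.

Definition piz (m : nat) (z : int) : int := (z %% (m%:Z))%Z.

Definition A1 : 'rV[int]_24 :=
  \row_(j < 24) nth 0 (flatten (nseq 8 [:: 1; 0; -1])) j.

Definition A2 : 'rV[int]_24 :=
  \row_(j < 24) nth 0 [:: 0; 1; -1; -1; 3; -2; -2; 5; -3; -3; 7; -4; -4; 9;
                         -5; -5; 11; -6; -6; 13; -7; -7; 15; -8] j.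

(* X_24 = (delta_{r,s} + delta_{r,25-s})_{1<=r,s<=24}; with 0-based indices
   r,s : 'I_24 this is delta_{r,s} + delta_{r,23-s}. *)
Definition X24 : 'M[int]_24 :=
  \matrix_(r < 24, s < 24) ((r == s :> nat)%:R + (r == 23 - s :> nat)%N%:R).

Definition inO (A : 'rV[int]_24) : Prop :=
  exists (a1 a2 : int) (sgn : bool) (alpha beta : nat),
    (alpha <= 1)%N /\
    a2 = (-1) ^+ sgn * 3 ^+ alpha * 2 ^+ beta /\
    ~~ (3 %| gcdz a1 a2)%Z /\
    A = a1 *: A1 + a2 *: A2.

Definition IAP (m : nat) (A D : 'rV[int]_24) (j : int) : int :=
  let r : 'I_24 := inord `|(j %% 24)%Z|%N in
  let q : int := (j %/ 24)%Z in
  piz m (A 0 r + q * D 0 r).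

Definition Sseq (m : nat) (A : 'rV[int]_24) : int -> int :=
  let pA := map_mx (piz m) A in
  IAP m pA (map_mx (piz m) (pA *m X24)).

Fixpoint orbitm (m : nat) (u : int -> int) (i : nat) (j : int) : int :=
  match i with
  | 0 => piz m (u j)
  | i'.+1 => piz m (- orbitm m u i' j - orbitm m u i' (j + 1))
  end.

Definition periodic (a : nat -> int -> int) (p q : nat) : Prop :=
  forall (i : nat) (j : int), a (i + q)%N j = a i j /\ a i (j + p%:Z) = a i j.

Definition prefixS (u : int -> int) (n : nat) : seq int :=
  [seq u (Posz j) | j <- iota 0 n].

Fixpoint nab (m : nat) (s : seq int) (i j : nat) : int :=
  match i with
  | 0 => piz m (nth 0 s j)
  | i'.+1 => piz m (- nab m s i' j - nab m s i' j.+1)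
  end.

Definition nabla (m : nat) (s : seq int) : seq int :=
  [seq nab m s ij.1 ij.2
  | ij <- [seq (i, j) | i <- iota 0 (size s), j <- iota 0 (size s - i)]].

Definition balanced (m : nat) (t : seq int) : Prop :=
  forall x y : int, 0 <= x < m%:Z -> 0 <= y < m%:Z ->
    count (pred1 x) t = count (pred1 y) t.

From mathcomp Require Import all_boot all_order all_algebra.
From mathcomp Require Import zify ring.
Import Order.TTheory GRing.Theory Num.Theory.

(* Write a = a1 and b = a2. Over the integers the orbit of S has a closed form:
   if j - i = 3k + r with 0 <= r < 3, its entry (i, j) is a - bk, b(i + 2k + 1) or
   -a - b(i + k + 1) according as r = 0, 1 or 2.  This holds on row 0 (a check of
   the 24 residues of j modulo 24) and is propagated by the recurrence.  Shifting i
   or j by 3m changes the entries by multiples of m, hence the periodicity.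
   Along a row, and along each line of fixed class r inside the triangle of size 3m,
   the entries form arithmetic progressions of difference +-b or 2b.  The condition
   on a2 makes such progressions hit every residue modulo m equally often in total:
   directly when a2 is a unit modulo m, and through a count modulo 3 when 3 divides
   m and a2 but not a1.  Pairing the lines l and l + m of each class (m is odd)
   shows that the triangle of size 3m is balanced; the triangle of size 3(lam+1)m
   splits into the triangles of sizes 3 lam m and 3m, which are copies of balanced
   ones by periodicity, and a rectangle made of full periods of rows. *)

(** * Sums over intervals and triangles *)

Section NatSums.
Implicit Types (F : nat -> nat) (f : nat -> nat -> nat).

Lemma big_nat_periodic_window F p j0 :
  (forall j, F (j + p) = F j) ->
  \sum_(j0 <= j < j0 + p) F j = \sum_(0 <= j < p) F j.
Proof.
move=> hF; elim: j0 => [|j0 IH]; first by rewrite add0n.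
case: p hF IH => [|p] hF IH; first by rewrite !addn0 !big_geq.
have lt_j0 : j0 < j0 + p.+1 by rewrite addnS ltnS leq_addr.
rewrite -IH [RHS]big_ltn // addSn big_nat_recr /=; last exact: lt_j0.
by rewrite hF addnC.
Qed.

Lemma big_nat_periods F p l :
  (forall j, F (j + p) = F j) ->
  \sum_(0 <= j < l * p) F j = l * \sum_(0 <= j < p) F j.
Proof.
move=> hF; elim: l => [|l IH]; first by rewrite mul0n big_geq.
rewrite mulSn addnC (big_cat_nat (n := l * p)) ?leq_addr //= IH.
by rewrite big_nat_periodic_window // mulSn addnC.
Qed.

Lemma big_nat_blocks3 F m :
  \sum_(0 <= e < 3 * m) F e =
  \sum_(0 <= k < m) (F (3 * k) + F (3 * k + 1) + F (3 * k + 2)).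
Proof.
elim: m => [|m IH]; first by rewrite muln0 !big_geq.
rewrite [RHS]big_nat_recr //= -IH mulnS addnC addn3 !big_nat_recr //=.
by rewrite addn1 addn2 !addnA.
Qed.

Lemma sum_nat_eq_shift a b L :
  \sum_(0 <= j < L) (j + a == b : nat) = ((a <= b) && (b < a + L) : nat).
Proof.
elim: L => [|L IH]; first by rewrite big_geq //; lia.
rewrite big_nat_recr //= IH; lia.
Qed.

Lemma sum_nat_interval lo hi n :
  \sum_(0 <= i < n) ((lo <= i) && (i < hi) : nat) = minn hi n - lo.
Proof.
elim: n => [|n IH]; first by rewrite big_geq //; lia.
rewrite big_nat_recr //= IH; lia.
Qed.

Lemma sum_fold_periodic m K F (g : nat -> nat) :
  (forall l, g (l + m) = g l) -> (forall l, l < m -> F l + F (l + m) = K) ->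
  \sum_(0 <= l < 2 * m) g l * F l = K * \sum_(0 <= l < m) g l.
Proof.
move=> hg hF; rewrite mul2n -addnn (big_cat_nat (n := m)) ?leq_addr //=.
rewrite -{2}[m]add0n big_addn addnK -big_split big_distrr /=.
by apply: eq_big_nat => l hl; rewrite hg -mulnDr hF // mulnC.
Qed.

Definition tri_sum n f := \sum_(0 <= i < n) \sum_(0 <= j < n - i) f i j.

Lemma tri_sumE n f :
  tri_sum n f = \sum_(0 <= i < n) \sum_(0 <= j < n) (i + j < n) * f i j.
Proof.
apply: eq_big_nat => i hi.
rewrite [RHS](big_cat_nat (n := n - i)) ?leq_subr //=.
rewrite [X in _ = _ + X]big1_seq ?addn0 => [|j]; last first.
  by rewrite mem_index_iota => hj; rewrite (_ : i + j < n = false) //; lia.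
by apply: eq_big_nat => j hj; rewrite (_ : i + j < n = true) ?mul1n //; lia.
Qed.

Lemma eq_tri_sum {n} {f g} :
  (forall i j, i + j < n -> f i j = g i j) -> tri_sum n f = tri_sum n g.
Proof. by move=> efg; apply: eq_big_nat => i hi; apply: eq_big_nat => j hj; apply: efg; lia. Qed.

Lemma tri_sum_swap n f : tri_sum n f = tri_sum n (fun i j => f j i).
Proof.
rewrite !tri_sumE exchange_big /=.
by apply: eq_big_nat => j _; apply: eq_big_nat => i _; rewrite addnC.
Qed.

Lemma tri_sumD n f g :
  tri_sum n (fun i j => f i j + g i j) = tri_sum n f + tri_sum n g.
Proof. by rewrite /tri_sum -big_split; apply: eq_bigr => i _; rewrite big_split. Qed.

Lemma tri_sum_cat p n f :
  tri_sum (p + n) f =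
  \sum_(0 <= i < p) \sum_(0 <= j < n) f i j +
  tri_sum p (fun i j => f i (j + n)) + tri_sum n (fun i j => f (i + p) j).
Proof.
rewrite /tri_sum (big_cat_nat (n := p)) ?leq_addr //= -{3}[p]add0n big_addn.
rewrite addKn -big_split /=; congr (_ + _); apply: eq_big_nat => i hi.
  rewrite (big_cat_nat (n := n)) /=; [|lia|lia].
  by rewrite -{2}[n]add0n big_addn (_ : p + n - i - n = p - i) //; lia.
by rewrite (_ : p + n - (i + p) = n - i) //; lia.
Qed.

Lemma tri_sum_fiber n L (w f : nat -> nat -> nat) (g : nat -> nat) :
  (forall i j, i + j < n -> f i j < L) ->
  tri_sum n (fun i j => w i j * g (f i j)) =
  \sum_(0 <= l < L) g l * tri_sum n (fun i j => w i j * (f i j == l)).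
Proof.
move=> hf; rewrite /tri_sum.
under [RHS]eq_bigr => l _ do rewrite big_distrr /=.
under [RHS]eq_bigr => l _ do under eq_bigr => i _ do rewrite big_distrr /=.
rewrite exchange_big /=; apply: eq_big_nat => i hi.
rewrite exchange_big /=; apply: eq_big_nat => j hj.
have hfij : f i j \in index_iota 0 L by rewrite mem_index_iota; have := hf i j; lia.
rewrite (bigD1_seq _ hfij (iota_uniq _ _)) /=.
rewrite eqxx muln1 big1 ?addn0 1?mulnC // => l /negbTE.
by rewrite eq_sym => ->; rewrite !muln0.
Qed.

Lemma tri_sum_periodic_lines {n m K : nat} {w f : nat -> nat -> nat} {g : nat -> nat} :
  (forall l, g (l + m) = g l) ->
  (forall l, l < m -> tri_sum n (fun i j => w i j * (f i j == l)) +
                      tri_sum n (fun i j => w i j * (f i j == l + m)) = K) ->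
  (forall i j, i + j < n -> f i j < 2 * m) ->
  tri_sum n (fun i j => w i j * g (f i j)) = K * \sum_(0 <= l < m) g l.
Proof.
move=> hg hK hf; rewrite (tri_sum_fiber _ _ w _ g hf).
exact: (sum_fold_periodic _ _ _ _ hg hK).
Qed.

End NatSums.

(* A point (i, j) of the triangle i + j < 3m lies in the class r of j - i modulo 3
   (shifted by 3m to avoid truncated subtraction) and on the line [tri_line m r i j];
   along each line of a class the orbit is an arithmetic progression. *)
Definition tri_class (m i j : nat) : nat := (j + 3 * m - i) %% 3.

Definition tri_line (m r i j : nat) : nat :=
  if r == 0 then (j + 3 * m - i) %/ 3
  else if r == 1 then (i + 2 * j + 1) %/ 3
  else (2 * i + j + 1) %/ 3.

Section LineCounts.
Variable m : nat.

Let tri_points r l := tri_sum (3 * m) (fun i j => (tri_class m i j == r) * (tri_line m r i j == l)).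

Lemma tri_line0_count l : l < 2 * m ->
  tri_points 0 l = minn ((6 * m - 3 * l + 1) %/ 2) (3 * m) - (3 * m - 3 * l).
Proof.
move=> hl; rewrite /tri_points /tri_sum -sum_nat_interval; apply: eq_big_nat => i hi.
transitivity (\sum_(0 <= j < 3 * m - i) (j + 3 * m == i + 3 * l : nat)).
  by apply: eq_big_nat => j hj; rewrite /tri_class /tri_line /=; lia.
by rewrite sum_nat_eq_shift; lia.
Qed.

Lemma tri_line1_count l :
  tri_points 1 l = minn ((3 * l + 1) %/ 2) (3 * m) - (3 * l - 3 * m).
Proof.
rewrite /tri_points tri_sum_swap /tri_sum -sum_nat_interval; apply: eq_big_nat => j hj.
transitivity (\sum_(0 <= i < 3 * m - j) (i + (2 * j + 1) == 3 * l : nat)).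
  by apply: eq_big_nat => i hi; rewrite /tri_class /tri_line /=; lia.
by rewrite sum_nat_eq_shift; lia.
Qed.

Lemma tri_line2_count l :
  tri_points 2 l = minn ((3 * l + 1) %/ 2) (3 * m) - (3 * l - 3 * m).
Proof.
rewrite /tri_points /tri_sum -sum_nat_interval; apply: eq_big_nat => i hi.
transitivity (\sum_(0 <= j < 3 * m - i) (j + (2 * i + 1) == 3 * l : nat)).
  by apply: eq_big_nat => j hj; rewrite /tri_class /tri_line /=; lia.
by rewrite sum_nat_eq_shift; lia.
Qed.

Lemma tri_line_pair r : odd m -> r < 3 -> forall l, l < m ->
  tri_points r l + tri_points r (l + m) = (3 * m + 1) %/ 2.
Proof.
move=> m_odd + l hl; case: r => [|[|[|//]]] _.
- by rewrite !tri_line0_count; lia.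
- by rewrite !tri_line1_count; lia.
- by rewrite !tri_line2_count; lia.
Qed.

End LineCounts.

Lemma count_map_allpairs (T : Type) (f : nat -> nat -> T) (P : pred T)
    (s : seq nat) (t : nat -> seq nat) :
  count P [seq f ij.1 ij.2 | ij <- [seq (i, j) | i <- s, j <- t i]] =
  \sum_(i <- s) \sum_(j <- t i) P (f i j).
Proof.
elim: s => [|i s IH] /=; first by rewrite big_nil.
by rewrite map_cat count_cat IH big_cons -map_comp count_map -sum1_count big_mkcond.
Qed.

Lemma nab_prefixS (m : nat) (u : int -> int) (n i j : nat) :
  i + j < n -> nab m (prefixS u n) i j = orbitm m u i j%:Z.
Proof.
elim: i j => [|i IH] j hij /=.
  by rewrite add0n in hij; rewrite /prefixS (nth_map 0%N) ?size_iota // nth_iota.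
by rewrite !IH -1?addn1 ?PoszD //; lia.
Qed.

Lemma count_nabla (m : nat) (u : int -> int) (n : nat) (x : int) :
  count (pred1 x) (nabla m (prefixS u n)) = tri_sum n (fun i j => orbitm m u i j%:Z == x).
Proof.
rewrite /nabla count_map_allpairs size_map size_iota /tri_sum /index_iota subn0.
apply: eq_big_seq => i; rewrite mem_iota subn0 => hi.
by apply: eq_big_seq => j; rewrite mem_iota => hj; rewrite nab_prefixS //; lia.
Qed.

Local Open Scope ring_scope.

(** * The orbit over the integers *)

Section Reduction.
Variable m : nat.
Implicit Types u v x y : int.

Lemma piz_congr u v : (m%:Z %| u - v)%Z -> piz m u = piz m v.
Proof. by move=> muv; apply/eqP; rewrite /piz eqz_mod_dvd. Qed.

Lemma piz_small y : 0 <= y < m%:Z -> piz m y = y.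
Proof. exact: modz_small. Qed.

Lemma piz_id y : piz m (piz m y) = piz m y.
Proof. exact: modz_mod. Qed.

Lemma piz_range y : (0 < m)%N -> 0 <= piz m y < m%:Z.
Proof. by move=> m_gt0; rewrite /piz modz_ge0 ?ltz_pmod //; lia. Qed.

Lemma piz_opp_sub x y : piz m (- piz m x - piz m y) = piz m (- x - y).
Proof. by rewrite /piz -modzDm !modzNm modzDm. Qed.

End Reduction.

Lemma divz3_spec (d : int) : d = (d %/ 3)%Z * 3 + (d %% 3)%Z /\ 0 <= (d %% 3)%Z < 3.
Proof. lia. Qed.

Definition zorbit_block (a b i k r : int) : int :=
  if r == 0 then a - b * k
  else if r == 1 then b * (i + 2 * k + 1)
  else - a - b * (i + k + 1).

Definition zorbit (a b i j : int) : int :=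
  zorbit_block a b i ((j - i) %/ 3)%Z ((j - i) %% 3)%Z.

Lemma zorbitE a b i j k r :
  j - i = k * 3 + r -> 0 <= r < 3 -> zorbit a b i j = zorbit_block a b i k r.
Proof.
move=> hd hr; rewrite /zorbit.
have -> : ((j - i) %/ 3)%Z = k by lia.
by have -> : ((j - i) %% 3)%Z = r by lia.
Qed.

Lemma zorbit_step a b i j :
  zorbit a b (i + 1) j = - zorbit a b i j - zorbit a b i (j + 1).
Proof.
have [hd hr] := divz3_spec (j - i); set k := ((j - i) %/ 3)%Z in hd hr *.
have [r0|[r1|r2]] : ((j - i) %% 3 = 0 \/ (j - i) %% 3 = 1 \/ (j - i) %% 3 = 2)%Z by lia.
- rewrite (@zorbitE a b i j k 0); [|lia|lia].
  rewrite (@zorbitE a b (i + 1) j (k - 1) 2); [|lia|lia].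
  rewrite (@zorbitE a b i (j + 1) k 1); [|lia|lia].
  rewrite /zorbit_block /=; ring.
- rewrite (@zorbitE a b i j k 1); [|lia|lia].
  rewrite (@zorbitE a b (i + 1) j k 0); [|lia|lia].
  rewrite (@zorbitE a b i (j + 1) k 2); [|lia|lia].
  rewrite /zorbit_block /=; ring.
- rewrite (@zorbitE a b i j k 2); [|lia|lia].
  rewrite (@zorbitE a b (i + 1) j k 1); [|lia|lia].
  rewrite (@zorbitE a b i (j + 1) (k + 1) 0); [|lia|lia].
  rewrite /zorbit_block /=; ring.
Qed.

Section Periodicity.
Variable m : nat.

Lemma zorbit_shiftj a b i j n : (m%:Z %| n)%Z ->
  piz m (zorbit a b i (j + 3 * n)) = piz m (zorbit a b i j).
Proof.
move=> m_n; have [hd hr] := divz3_spec (j - i).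
set k := ((j - i) %/ 3)%Z in hd hr *; set r := ((j - i) %% 3)%Z in hd hr *.
rewrite (@zorbitE a b i j k r) // (@zorbitE a b i _ (k + n) r) //; last lia.
apply: piz_congr; apply: dvdz_trans m_n _; apply/dvdzP; rewrite /zorbit_block.
case: ifP => _; [by exists (- b); ring | case: ifP => _].
  by exists (2 * b); ring.
by exists (- b); ring.
Qed.

Lemma zorbit_shifti a b i j n : (m%:Z %| n)%Z ->
  piz m (zorbit a b (i + 3 * n) j) = piz m (zorbit a b i j).
Proof.
move=> m_n; have [hd hr] := divz3_spec (j - i).
set k := ((j - i) %/ 3)%Z in hd hr *; set r := ((j - i) %% 3)%Z in hd hr *.
rewrite (@zorbitE a b i j k r) // (@zorbitE a b _ j (k - n) r) //; last lia.
apply: piz_congr; apply: dvdz_trans m_n _; apply/dvdzP; rewrite /zorbit_block.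
case: ifP => _; [by exists b; ring | case: ifP => _].
  by exists b; ring.
by exists (- 2 * b); ring.
Qed.

Lemma orbitm_zorbit {a b : int} {u : int -> int} :
  (forall j, u j = piz m (zorbit a b 0 j)) ->
  forall (i : nat) j, orbitm m u i j = piz m (zorbit a b i j).
Proof.
move=> hu; elim=> [|i IH] j /=; first by rewrite hu piz_id.
by rewrite !IH piz_opp_sub -zorbit_step -addn1 PoszD.
Qed.

End Periodicity.

Lemma mulmx_X24 (v : 'rV[int]_24) (r : 'I_24) :
  (v *m X24) 0 r = v 0 r + v 0 (rev_ord r).
Proof.
have delta (k : 'I_24) (F : 'I_24 -> int) : \sum_s F s * (s == k)%:R = F k.
  rewrite (bigD1 k) //= eqxx mulr1 big1 ?addr0 // => s /negbTE ->.
  by rewrite mulr0.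
rewrite !mxE -(delta r (v 0)) -(delta (rev_ord r) (v 0)) -big_split /=.
by apply: eq_bigr => s _; rewrite mxE -mulrDr.
Qed.

Lemma zorbit_IAP (a1 a2 q : int) (r : 'I_24) :
  let A := a1 *: A1 + a2 *: A2 in
  A 0 r + q * (A 0 r + A 0 (rev_ord r)) = zorbit a1 a2 0 (q * 24 + (r : nat)%:Z).
Proof.
rewrite /= (@zorbitE _ _ _ _ (q * 8 + (r %/ 3)%N%:Z) (r %% 3)%N%:Z); [|lia|lia].
rewrite !mxE; case: r => r hr /=.
do 24? (case: r hr => [|r] hr; first by rewrite /zorbit_block /divn /modn /=; ring).
by [].
Qed.

Lemma Sseq_zorbit (m : nat) {a1 a2 : int} {A : 'rV[int]_24} :
  A = a1 *: A1 + a2 *: A2 -> forall j, Sseq m A j = piz m (zorbit a1 a2 0 j).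
Proof.
move=> hA j; rewrite /Sseq /IAP /= [X in _ * X]mxE mulmx_X24.
set r : 'I_24 := inord _; set q := (j %/ 24)%Z.
have -> : j = q * 24 + (r : nat)%:Z by rewrite /r inordK; lia.
by rewrite -zorbit_IAP -hA !mxE /piz modzDm modzDml -modzDmr modzMmr modzDmr.
Qed.

(** * Residues along arithmetic progressions *)

Definition aphit (m : nat) (c e x : int) (k : nat) : nat := piz m (c + e * k%:Z) == x.

Definition apcount (m : nat) (c e x : int) : nat := \sum_(0 <= k < m) aphit m c e x k.

Lemma aphit_periodic (m : nat) (c e x : int) (k : nat) :
  aphit m c e x (k + m) = aphit m c e x k.
Proof.
congr (nat_of_bool (_ == x)); apply: piz_congr.
by apply/dvdzP; exists e; rewrite PoszD; ring.
Qed.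

Lemma apcountE (m : nat) (c e x : int) :
  apcount m c e x = count (pred1 x) [seq piz m (c + e * k%:Z) | k <- iota 0 m].
Proof.
rewrite /apcount /aphit /index_iota subn0 count_map -sum1_count [RHS]big_mkcond /=.
by apply: eq_bigr => k _; case: (_ == x).
Qed.

Section Progressions.
Variable m : nat.
Hypothesis m_gt0 : (0 < m)%N.

Let residues := [seq k%:Z | k <- iota 0 m].

Lemma mem_residues (x : int) : (x \in residues) = (0 <= x < m%:Z).
Proof.
apply/mapP/idP => [[k + ->]|hx]; first by rewrite mem_iota; lia.
by exists `|x|%N; [rewrite mem_iota|]; lia.
Qed.

Lemma perm_progression (c u : int) : coprimez u m ->
  perm_eq [seq piz m (c + u * k%:Z) | k <- iota 0 m] residues.
Proof.
move=> u_m.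
have inj : {in iota 0 m &, injective (fun k : nat => piz m (c + u * k%:Z))}.
  move=> k1 k2; rewrite !mem_iota => hk1 hk2 /eqP; rewrite /piz eqz_mod_dvd.
  rewrite (_ : _ - _ = (k1%:Z - k2%:Z) * u); last by ring.
  rewrite Gauss_dvdzl 1?coprimez_sym //.
  by rewrite -eqz_mod_dvd !modz_small => [/eqP[]| |]; lia.
have uniq_res : uniq residues by rewrite map_inj_uniq ?iota_uniq // => ? ? [].
have uniq_prog : uniq [seq piz m (c + u * k%:Z) | k <- iota 0 m].
  by rewrite (map_inj_in_uniq inj) iota_uniq.
have sub_res : {subset [seq piz m (c + u * k%:Z) | k <- iota 0 m] <= residues}.
  by move=> y /mapP[k _ ->]; rewrite mem_residues piz_range.
have [|_ eq_res] := uniq_min_size uniq_prog sub_res; first by rewrite !size_map.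
by apply: uniq_perm; rewrite ?uniq_prog.
Qed.

Lemma apcount_unit (c u x : int) : coprimez u m -> 0 <= x < m%:Z ->
  apcount m c u x = 1%N.
Proof.
move=> u_m hx; rewrite apcountE (permP (perm_progression c _ u_m)).
by rewrite count_uniq_mem ?mem_residues ?hx // map_inj_uniq ?iota_uniq // => ? ? [].
Qed.
Lemma apcount_scale (c e u x : int) : coprimez u m ->
  apcount m c (e * u) x = apcount m c e x.
Proof.
move=> u_m.
have reduce (k : nat) : piz m (c + e * u * k%:Z) = piz m (c + e * piz m (0 + u * k%:Z)).
  apply: piz_congr; apply/dvdzP; exists (e * ((u * k%:Z) %/ m)%Z).
  by rewrite add0r -mulrA {1}(divz_eq (u * k%:Z) m); ring.
rewrite /apcount /aphit /index_iota subn0; under eq_bigr => k _ do rewrite reduce.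
rewrite -(big_map (fun k : nat => piz m (0 + u * k%:Z)) xpredT
                  (fun y => (piz m (c + e * y) == x) : nat)).
by rewrite (perm_big _ (perm_progression 0 _ u_m)) big_map.
Qed.

End Progressions.

Lemma apcount_three (m' : nat) (c x : int) : (0 < m')%N -> 0 <= x < (3 * m')%N%:Z ->
  apcount (3 * m') c 3 x = (3 * (3 %| (x - c)%R)%Z)%N.
Proof.
move=> m'_gt0 hx; set t := ((x - c) %/ 3)%Z.
have hit_iff (k : nat) :
    (piz (3 * m') (c + 3 * k%:Z) == x) = (3 %| x - c)%Z && (piz m' (t + -1 * k%:Z) == 0).
  rewrite -{1}(piz_small _ _ hx) /piz eqz_mod_dvd (sameP eqP dvdz_mod0P) PoszM.
  case: (boolP (3 %| x - c)%Z) => h3 /=.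
    have xc : x - c = t * 3 by rewrite /t divzK.
    rewrite (_ : c + 3 * k%:Z - x = (- (t + -1 * k%:Z)) * 3); last by lia.
    by rewrite (mulrC 3%:Z) dvdz_mul2r // rpredN.
  apply/negP => /(dvdz_trans (dvdz_mulr m'%:Z (dvdzz 3))) h3'.
  move: h3; rewrite (_ : x - c = - (c + 3 * k%:Z - x) + 3 * k%:Z); last by ring.
  by rewrite rpredD ?rpredN ?h3' ?dvdz_mulr.
rewrite /apcount /aphit; under eq_bigr => k _ do rewrite hit_iff -mulnb.
rewrite -big_distrr /= (big_nat_periods _ _ _ (aphit_periodic m' t (-1) 0)).
rewrite -/(apcount m' t (-1) 0) apcount_unit ?muln1 1?mulnC //.
by rewrite coprimeNz coprimezE coprime1n.
Qed.

Definition admissible (m : nat) (a b : int) : Prop :=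
  coprimez b m \/
  exists2 u : int, b = 3 * u & [/\ coprimez u m, (3 %| m)%N & ~~ (3 %| a)%Z].

(* When b = 3u, exactly one of x - a, x and x + a is divisible by 3. *)
Lemma apcount_triple (m : nat) (a b c v0 v1 v2 x : int) :
  (0 < m)%N -> admissible m a b ->
  coprimez v0 m -> coprimez v1 m -> coprimez v2 m -> 0 <= x < m%:Z ->
  (apcount m a (b * v0) x + apcount m (b * c) (b * v1) x +
   apcount m (- a - b * c) (b * v2) x = 3)%N.
Proof.
move=> m_gt0 [b_m|[u -> [u_m /dvdnP[m' m_eq] a3]]] v0_m v1_m v2_m hx.
  by rewrite !apcount_unit // coprimezMl b_m.
rewrite -!mulrA !apcount_scale ?coprimezMl ?u_m //.
move: m_gt0 hx; rewrite m_eq mulnC => m_gt0 hx.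
by rewrite !apcount_three //; lia.
Qed.

(** * Residue counts in the orbit *)

Section OrbitCounts.
Variables (m : nat) (a b : int).
Hypotheses (m_gt0 : (0 < m)%N) (m_odd : odd m) (adm : admissible m a b).

Let coprime_m1 : coprimez (-1) m.
Proof. by rewrite coprimeNz coprimezE coprime1n. Qed.

Let coprime_1 : coprimez 1 m.
Proof. by rewrite coprimezE coprime1n. Qed.

Let coprime_2 : coprimez 2 m.
Proof. by rewrite coprimezE coprime2n. Qed.

Lemma row_count (i : nat) (x : int) : 0 <= x < m%:Z ->
  (\sum_(0 <= j < 3 * m) (piz m (zorbit a b i%:Z j%:Z) == x))%N = 3%N.
Proof.
move=> hx; set F := fun j : nat => (piz m (zorbit a b i%:Z j%:Z) == x : nat).
have F_periodic (j : nat) : F (j + 3 * m)%N = F j.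
  by rewrite /F PoszD PoszM zorbit_shiftj ?dvdzz.
rewrite -(big_nat_periodic_window _ _ i F_periodic) -{1}[i]add0n big_addn addKn.
have blocks (k : nat) : (F (3 * k + i) + F (3 * k + 1 + i) + F (3 * k + 2 + i))%N =
    (aphit m a (b * -1) x k + aphit m (b * (i%:Z + 1)) (b * 2) x k +
     aphit m (- a - b * (i%:Z + 1)) (b * -1) x k)%N.
  rewrite /F (@zorbitE _ _ _ _ k 0); [|lia|lia].
  rewrite (@zorbitE _ _ _ _ k 1); [|lia|lia].
  rewrite (@zorbitE _ _ _ _ k 2); [|lia|lia].
  rewrite /zorbit_block /aphit /=.
  by congr (nat_of_bool (piz m _ == x) + nat_of_bool (piz m _ == x) +
            nat_of_bool (piz m _ == x))%N; ring.
rewrite big_nat_blocks3; under eq_bigr => k _ do rewrite blocks.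
by rewrite !big_split /=; apply: apcount_triple.
Qed.

Lemma zorbit_tri_hit (i j : nat) (x : int) : (i + j < 3 * m)%N ->
  (piz m (zorbit a b i%:Z j%:Z) == x : nat) =
  ((tri_class m i j == 0) * aphit m a (b * -1) x (tri_line m 0 i j) +
   (tri_class m i j == 1) * aphit m (b * 0) (b * 1) x (tri_line m 1 i j) +
   (tri_class m i j == 2) * aphit m (- a - b * 0) (b * -1) x (tri_line m 2 i j))%N.
Proof.
move=> hij; rewrite /aphit.
rewrite (@zorbitE _ _ _ _ ((tri_line m 0 i j)%:Z - m%:Z) (tri_class m i j)%:Z); last first.
- by rewrite /tri_class; lia.
- by rewrite /tri_class /tri_line /=; lia.
rewrite /zorbit_block /=.
have [c0|[c1|c2]] : (tri_class m i j = 0 \/ tri_class m i j = 1 \/ tri_class m i j = 2)%N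
  by rewrite /tri_class; lia.
- rewrite c0 /= mul1n !mul0n !addn0; congr (nat_of_bool (_ == x)).
  by apply: piz_congr; apply/dvdzP; exists b; ring.
- rewrite c1 /= mul1n !mul0n add0n addn0; congr (nat_of_bool (piz m _ == x)).
  have -> : i%:Z + 2 * ((tri_line m 0 i j)%:Z - m%:Z) + 1 = (tri_line m 1 i j)%:Z.
    by move: c1; rewrite /tri_class /tri_line /=; lia.
  ring.
- rewrite c2 /= mul1n !mul0n !add0n; congr (nat_of_bool (piz m _ == x)).
  have -> : i%:Z + ((tri_line m 0 i j)%:Z - m%:Z) + 1 = (tri_line m 2 i j)%:Z.
    by move: c2; rewrite /tri_class /tri_line /=; lia.
  ring.
Qed.

Definition tri_count (n : nat) (x : int) : nat :=
  tri_sum n (fun i j => piz m (zorbit a b i%:Z j%:Z) == x).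

Lemma tri_count_period (x : int) : 0 <= x < m%:Z ->
  tri_count (3 * m) x = (3 * ((3 * m + 1) %/ 2))%N.
Proof.
move=> hx; have line_lt r i j : (i + j < 3 * m -> tri_line m r i j < 2 * m)%N.
  by rewrite /tri_line; case: ifP => _; [|case: ifP => _]; lia.
rewrite /tri_count (eq_tri_sum (fun i j => @zorbit_tri_hit i j x)) !tri_sumD.
rewrite (tri_sum_periodic_lines (aphit_periodic _ _ _ _)
          (tri_line_pair m 0%N m_odd isT) (line_lt 0%N)).
rewrite (tri_sum_periodic_lines (aphit_periodic _ _ _ _)
          (tri_line_pair m 1%N m_odd isT) (line_lt 1%N)).
rewrite (tri_sum_periodic_lines (aphit_periodic _ _ _ _)
          (tri_line_pair m 2%N m_odd isT) (line_lt 2%N)).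
rewrite -!mulnDr mulnC; congr (_ * _)%N.
exact: (apcount_triple m a b 0 (-1) 1 (-1) x).
Qed.

Lemma tri_count_succ (lam : nat) (x : int) : 0 <= x < m%:Z ->
  tri_count (lam.+1 * (3 * m)) x =
  (tri_count (lam * (3 * m)) x + 3 * ((3 * m + 1) %/ 2) + 3 * m * (lam * 3))%N.
Proof.
move=> hx; set F := fun i j : nat => (piz m (zorbit a b i%:Z j%:Z) == x : nat).
have F_shiftj (k i j : nat) : F i (j + k * (3 * m))%N = F i j.
  rewrite /F PoszD (_ : (k * (3 * m))%N%:Z = 3 * (k * m)%N%:Z); last by lia.
  by rewrite zorbit_shiftj // PoszM dvdz_mull.
have F_shifti (i j : nat) : F (i + 3 * m)%N j = F i j.
  by rewrite /F PoszD PoszM zorbit_shifti ?dvdzz.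
have rows : (\sum_(0 <= i < 3 * m) \sum_(0 <= j < lam * (3 * m)) F i j = 3 * m * (lam * 3))%N.
  rewrite (eq_bigr (fun _ => lam * 3)%N) ?sum_nat_const_nat ?subn0 // => i _.
  by rewrite big_nat_periods ?row_count // => j; rewrite -[(3 * m)%N]mul1n F_shiftj.
rewrite /tri_count mulSn tri_sum_cat -/F rows.
rewrite (eq_tri_sum (fun i j _ => F_shiftj lam i j)) (eq_tri_sum (fun i j _ => F_shifti i j)).
by rewrite -/(tri_count _ x) tri_count_period //; lia.
Qed.

Lemma tri_count_balanced (lam : nat) (x y : int) : 0 <= x < m%:Z -> 0 <= y < m%:Z ->
  tri_count (lam * (3 * m)) x = tri_count (lam * (3 * m)) y.
Proof.
move=> hx hy; elim: lam => [|lam IH]; first by rewrite /tri_count /tri_sum mul0n !big_geq.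
by rewrite !tri_count_succ // IH.
Qed.

End OrbitCounts.

Lemma admissible_coeffs (m : nat) (a1 : int) (sgn : bool) (alpha beta : nat) :
  odd m -> (alpha <= 1)%N ->
  ~~ (3 %| gcdz a1 ((-1) ^+ sgn * 3 ^+ alpha * 2 ^+ beta))%Z ->
  admissible m a1 ((-1) ^+ sgn * 3 ^+ alpha * 2 ^+ beta).
Proof.
move=> m_odd alpha_le1 gcd3.
have unit_sgn : coprimez ((-1) ^+ sgn) m.
  by rewrite coprimezXl // coprimeNz coprimezE coprime1n.
have unit_2 : coprimez (2 ^+ beta) m by rewrite coprimezXl // coprimezE coprime2n.
case: alpha alpha_le1 gcd3 => [|[|//]] _ gcd3.
  by left; rewrite expr0 mulr1 coprimezMl unit_sgn unit_2.
case: (boolP (coprimez 3 m)) => [m3|].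
  by left; rewrite expr1 !coprimezMl unit_sgn m3 unit_2.
rewrite coprimezE prime_coprime // negbK => m3.
right; exists ((-1) ^+ sgn * 2 ^+ beta); first by rewrite expr1; ring.
split; rewrite ?coprimezMl ?unit_sgn //; apply: contra gcd3 => a3.
by rewrite dvdz_gcd a3 expr1 mulrAC dvdz_mull ?dvdzz.
Qed.

Theorem corollary8 (A : 'rV[int]_24) (m : nat) :
  inO A -> odd m -> (0 < m)%N ->
  periodic (orbitm m (Sseq m A)) (3 * m)%N (3 * m)%N /\
  (forall lam : nat, balanced m (nabla m (prefixS (Sseq m A) (3 * lam * m)%N))).
Proof.
move=> [a1 [a2 [sgn [alpha [beta [alpha_le1 [a2E [gcd3 AE]]]]]]]] m_odd m_gt0.
have orbitE := orbitm_zorbit m (Sseq_zorbit m AE).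
have adm : admissible m a1 a2 by rewrite a2E; apply: admissible_coeffs; rewrite -?a2E.
split=> [i j | lam x y hx hy].
  by rewrite !orbitE PoszD PoszM zorbit_shifti ?zorbit_shiftj ?dvdzz.
rewrite !count_nabla (_ : (3 * lam * m = lam * (3 * m))%N); last by lia.
rewrite !(eq_tri_sum (fun i j _ => congr1 (fun z => nat_of_bool (z == _)) (orbitE i j))).
exact: tri_count_balanced.
Qed.
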